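(* Let $G$ be a bipartite $d_1$-regular (multi)graph with $n$ vertices in each part, and let $\alpha$ be an upper bound on the second largest eigenvalue of $G$. Let $\gamma$ be an integer dividing $n$ and set $d_2 = \gamma d_1$. Let $H$ be the bipartite $(d_1,d_2)$-biregular multigraph obtained by partitioning one of the parts of $G$ into groups of $\gamma$ vertices (in an arbitrary way) and merging each group into a single vertex (keeping all edges, with multiplicity). Let $\lambda_2$ be the second largest eigenvalue of $H$. Then $$|\lambda_2| \le \sqrt{d_1d_2}\,\alpha.$$
   Context: Eigenvalues here are those of the non-normalized adjacency matrices (entries count edge multiplicities). For a bipartite biregular graph with degrees $d_L, d_R$, the eigenvalues of the adjacency matrix come in pairs $\pm\lambda$, the largest pair being $\pm\sqrt{d_Ld_R}$; the ''second largest eigenvalue'' is the nonnegative member of the next pair, i.e. the largest absolute value among the eigenvalues after removing one copy of $\sqrt{d_Ld_R}$ and one copy of $-\sqrt{d_Ld_R}$. Merging a set of vertices means replacing them by one vertex adjacent to all neighbors of the merged vertices, with multiplicities added. *)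

From HB Require Import structures.
From mathcomp Require Import all_boot all_order all_algebra.
From mathcomp Require Import polyrcf.
Set Implicit Arguments. Unset Strict Implicit. Unset Printing Implicit Defensive.
Import Order.TTheory GRing.Theory Num.Theory.
Local Open Scope ring_scope.

(* A bipartite multigraph with left part 'I_m and right part 'I_k is given by
   its biadjacency matrix B : 'M[nat]_(m,k) (B i j = number of edges i--j). *)
Definition bip_adj (R : nzRingType) (m k : nat) (B : 'M[nat]_(m, k)) : 'M[R]_(m + k) :=
  block_mx 0 (map_mx (fun a : nat => a%:R) B) (map_mx (fun a : nat => a%:R) B^T) 0.

(* Eigenvalues of A (with multiplicity) = real roots of its characteristic
   polynomial counted with root multiplicity (a symmetric real matrix has a
   real spectrum).  The "second largest eigenvalue" of a bipartite biregular
   graph with top eigenvalue s = sqrt(dL dR): remove one copy of s and one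
   copy of -s from the spectrum, take the largest absolute value of what
   remains (0 if nothing remains). *)
Definition second_eig (R : rcfType) (N : nat) (A : 'M[R]_N) (s : R) : R :=
  let p := char_poly A in
  \big[Num.max/0]_(x <- rootsR p | ((x == s) + (x == - s) < mup x p)%N) `|x|.

Definition merge_right (m k l : nat) (B : 'M[nat]_(m, k)) (f : 'I_k -> 'I_l)
  : 'M[nat]_(m, l) :=
  \matrix_(i < m, g < l) (\sum_(j < k | f j == g) B i j)%N.

From HB Require Import structures.
From mathcomp Require Import all_boot all_order all_algebra.
From mathcomp Require Import polyrcf complex.
Import Order.TTheory GRing.Theory Num.Theory.
Set Implicit Arguments. Unset Strict Implicit. Unset Printing Implicit Defensive.
Local Open Scope ring_scope.
Local Open Scope sesquilinear_scope.

(* The adjacency matrices of G and H are real symmetric, hence unitarily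
   diagonalizable over R[i] with real spectrum.  Let x <> 0 be an eigenvalue of H
   that counts for its second eigenvalue.  It has an eigenvector (a, b) orthogonal
   to the top eigenvectors (1, +-sqrt(gamma) 1) of H, so b is orthogonal to 1, and
   |a| = |b| since x <> 0.  Pulling b back along the merging map gives y orthogonal
   to 1 with |y|^2 = gamma |b|^2 and y B^T = x a.  In G the only eigenvalues that
   may exceed alpha in absolute value are +-d1, each simple with eigenvector
   (1, +-1), and (0, y) is orthogonal to both; hence |x a| = |y B^T| <= alpha |y|,
   that is x^2 <= gamma alpha^2, and |x| <= sqrt(gamma) alpha <= sqrt(d1 d2) alpha. *)

Local Notation "''[' u , v ]" := (dotmx u v) : ring_scope.
Local Notation "''[' u ]" := (dotmx u u) : ring_scope.

Section DotProduct.
Variable C : numClosedFieldType.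
Implicit Types m n : nat.

Lemma dotmx_mulmxl m n (u : 'rV[C]_m) (v : 'rV[C]_n) (A : 'M[C]_(m, n)) :
  '[u *m A, v] = '[u, v *m A^t*].
Proof. by rewrite !dotmxE trmx_mul map_mxM trmxCK mulmxA. Qed.

Lemma dotmx_unitary m n (u v : 'rV[C]_m) (P : 'M[C]_(m, n)) :
  P \is unitarymx -> '[u *m P, v *m P] = '[u, v].
Proof. by move=> P_unitary; rewrite dotmx_mulmxl mulmxtVK. Qed.

Lemma dotmx_row_mx m n (a c : 'rV[C]_m) (b e : 'rV[C]_n) :
  '[row_mx a b, row_mx c e] = '[a, c] + '[b, e].
Proof. by rewrite !dotmxE tr_row_mx map_col_mx mul_row_col mxE. Qed.

Lemma dotmx_row m n (u : 'rV[C]_n) (M : 'M[C]_(m, n)) j :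
  '[u, row j M] = (u *m M^t*) 0 j.
Proof. by rewrite dotmxE !mxE; apply: eq_bigr => k _; rewrite !mxE. Qed.

Lemma dnormE n (u : 'rV[C]_n) : '[u] = \sum_i `|u 0 i| ^+ 2.
Proof. by rewrite dotmxE mxE; apply: eq_bigr => i _; rewrite !mxE normCK. Qed.

Lemma unitary_row_expansion n (P : 'M[C]_n) (u : 'rV[C]_n) :
  P \is unitarymx -> u = \sum_j '[u, row j P] *: row j P.
Proof.
move=> P_unitary; rewrite -{1}(mulmxKtV u P_unitary (erefl n)) mulmx_sum_row.
by apply: eq_bigr => j _; rewrite dotmx_row.
Qed.

Lemma dotmx_eigen_orth n (S : 'M[C]_n) (u v : 'rV[C]_n) (x y : C) :
  S^t* = S -> y^* = y -> u *m S = x *: u -> v *m S = y *: v -> x != y ->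
  '[u, v] = 0.
Proof.
move=> S_herm y_real uS vS xNy.
have : x * '[u, v] = y * '[u, v].
  by rewrite -linearZl_LR /= -uS dotmx_mulmxl S_herm vS linearZr /= y_real.
by move/eqP; rewrite -subr_eq0 -mulrBl mulf_eq0 subr_eq0 (negbTE xNy) => /eqP.
Qed.

Lemma row_unitary_neq0 n (P : 'M[C]_n) i : P \is unitarymx -> row i P != 0.
Proof.
move=> P_unitary; rewrite -(dnorm_eq0 (@dotmx C n)) /=.
by rewrite (row_unitarymxP P_unitary) eqxx oner_eq0.
Qed.

End DotProduct.

Section UnitaryDiagonalization.
Variables (C : numClosedFieldType) (N : nat).
Variables (P S : 'M[C]_N) (d : 'rV[C]_N).
Hypotheses (P_unitary : P \is unitarymx) (d_real : d \is a realmx).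
Hypothesis S_def : S = P^t* *m diag_mx d *m P.

Lemma unitary_diag_conj i : (d 0 i)^* = d 0 i.
Proof. by have /matrixP/(_ 0 i) := realmxC d_real; rewrite mxE. Qed.

Lemma unitary_diag_herm : S^t* = S.
Proof.
by rewrite S_def !trmx_mul !map_mxM trmxCK tr_diag_mx map_diag_mx (realmxC d_real) mulmxA.
Qed.

Lemma unitary_diag_row_eigen i : row i P *m S = d 0 i *: row i P.
Proof.
rewrite S_def !mulmxA -!row_mul (unitarymxP P_unitary) mul1mx mul_diag_mx.
by apply/rowP => j; rewrite !mxE.
Qed.

Lemma unitary_diag_char_poly : char_poly S = \prod_i ('X - (d 0 i)%:P).
Proof.
have PtP : P^t* *m P = 1%:M by have := mulmxKtV 1%:M P_unitary (erefl N); rewrite mul1mx.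
have -> : char_poly S = char_poly (diag_mx d).
  rewrite /char_poly /char_poly_mx.
  have -> : 'X%:M - map_mx polyC S =
     map_mx polyC (P^t*) *m ('X%:M - map_mx polyC (diag_mx d)) *m map_mx polyC P.
    rewrite mulmxBr mulmxBl S_def !map_mxM; congr (_ - _).
    by rewrite mul_mx_scalar -scalemxAl -map_mxM PtP map_mx1 scalemx1.
  rewrite !det_mulmx mulrC mulrA -det_mulmx -map_mxM.
  by rewrite (unitarymxP P_unitary) map_mx1 det1 mul1r.
rewrite char_poly_trig ?diag_mx_is_trig //.
by apply: eq_bigr => i _; rewrite mxE eqxx mulr1n.
Qed.

Lemma unitary_diag_mup a : mup a (char_poly S) = #|[pred i | d 0 i == a]|.
Proof.
rewrite unitary_diag_char_poly -(big_map (fun i => d 0 i) xpredT (fun y => 'X - y%:P)).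
rewrite mu_prod_XsubC count_map cardE /enum_mem size_filter.
by apply: eq_count => i /=; rewrite eq_sym.
Qed.

Lemma unitary_diag_dnorm_le z (al : C) : 0 <= al ->
  (forall i, `|d 0 i| <= al \/ '[z, row i P] = 0) ->
  '[z *m S] <= al ^+ 2 * '[z].
Proof.
move=> al_ge0 zP; set w := z *m P^t*.
have -> : z = w *m P by rewrite mulmxKtV.
rewrite S_def !mulmxA mulmxtVK // !(dotmx_unitary _ _ P_unitary) !dnormE mulr_sumr.
apply: ler_sum => i _; rewrite mul_mx_diag mxE normrM exprMn mulrC.
have [d_le | w_i0] := zP i; last by rewrite /w -dotmx_row w_i0 normr0 expr0n /= !mulr0.
by rewrite ler_wpM2r ?exprn_ge0 // lerXn2r ?nnegrE.
Qed.

Lemma unitary_diag_simple_orth i (e z : 'rV[C]_N) :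
  e *m S = d 0 i *: e -> e != 0 -> (forall j, d 0 j = d 0 i -> j = i) ->
  '[z, e] = 0 -> '[z, row i P] = 0.
Proof.
move=> eS e_neq0 d_simple ze0.
have eE : e = '[e, row i P] *: row i P.
  rewrite {1}(unitary_row_expansion e P_unitary) (bigD1 i) //= big1 ?addr0 // => j ji.
  rewrite (dotmx_eigen_orth unitary_diag_herm (unitary_diag_conj j) eS
    (unitary_diag_row_eigen j)) ?scale0r //.
  by apply: contra ji => /eqP/esym/d_simple ->.
have c_neq0 : '[e, row i P] != 0.
  by apply: contraNneq e_neq0 => c0; rewrite eE c0 scale0r.
move: ze0; rewrite eE linearZr /= => /eqP.
by rewrite mulf_eq0 conjC_eq0 (negbTE c_neq0) => /eqP.
Qed.

Lemma exists_eigen_orth (e : 'rV[C]_N) (s x : C) :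
  e *m S = s *: e -> s^* = s -> ((x == s) < #|[pred i | d 0%R i == x]|)%N ->
  exists2 v : 'rV_N, v != 0 & v *m S = x *: v /\ '[v, e] = 0.
Proof.
move=> eS s_real x_mult.
have [i /eqP d_i] : exists i : 'I_N, i \in [pred i | d 0 i == x].
  by apply/card_gt0P; apply: leq_ltn_trans x_mult.
have iS : row i P *m S = x *: row i P by rewrite unitary_diag_row_eigen d_i.
set a := '[row i P, e].
have [a0 | a_neq0] := eqVneq a 0.
  by exists (row i P); rewrite ?row_unitary_neq0.
have x_s : x = s.
  apply: contra_neq_eq a_neq0 => x_neq_s.
  exact: dotmx_eigen_orth unitary_diag_herm s_real iS eS x_neq_s.
move: x_mult; rewrite x_s eqxx (cardD1 i) inE d_i x_s eqxx add1n ltnS.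
case/card_gt0P => j; rewrite !inE => /andP[ji /eqP d_j].
have jS : row j P *m S = s *: row j P by rewrite unitary_diag_row_eigen d_j.
set b := '[row j P, e].
have vj : '[b *: row i P - a *: row j P, row j P] = - a.
  rewrite linearBl !linearZl_LR /= !(row_unitarymxP P_unitary) eqxx eq_sym (negbTE ji).
  by rewrite mulr0 mulr1 sub0r.
exists (b *: row i P - a *: row j P); last split.
- apply: contra_neq a_neq0 => v0; apply: oppr_inj.
  by rewrite oppr0 -vj v0 linear0l.
- by rewrite mulmxBl -!scalemxAl iS jS x_s !scalerA scalerBr !scalerA mulrC [s * a]mulrC.
- by rewrite linearBl !linearZl_LR /= -/a -/b mulrC subrr.
Qed.

Lemma exists_eigen_orth2 (e1 e2 : 'rV[C]_N) (s1 s2 x : C) :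
  e1 *m S = s1 *: e1 -> e2 *m S = s2 *: e2 -> s1^* = s1 -> s2^* = s2 -> s1 != s2 ->
  ((x == s1) + (x == s2) < #|[pred i | d 0%R i == x]|)%N ->
  exists2 v : 'rV_N, v != 0 & [/\ v *m S = x *: v, '[v, e1] = 0 & '[v, e2] = 0].
Proof.
move=> e1S e2S s1_real s2_real s1_neq_s2 x_mult.
have orth := dotmx_eigen_orth unitary_diag_herm.
have [x_s2 | x_neq_s2] := eqVneq x s2.
  have x_neq_s1 : x != s1 by rewrite x_s2 eq_sym.
  move: x_mult; rewrite (negbTE x_neq_s1) add0n => /(exists_eigen_orth e2S s2_real).
  case=> v v_neq0 [vS ve2]; exists v => //.
  by split => //; apply: orth s1_real vS e1S x_neq_s1.
move: x_mult; rewrite (negbTE x_neq_s2) addn0 => /(exists_eigen_orth e1S s1_real).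
case=> v v_neq0 [vS ve1]; exists v => //.
by split => //; apply: orth s2_real vS e2S x_neq_s2.
Qed.

End UnitaryDiagonalization.

Definition nat_mx (K : nzRingType) m k (B : 'M[nat]_(m, k)) : 'M[K]_(m, k) :=
  map_mx (fun a : nat => a%:R) B.

Definition merge_mx (K : nzRingType) n l (f : 'I_n -> 'I_l) : 'M[K]_(n, l) :=
  \matrix_(j, g) (f j == g)%:R.

Section BipartiteAlgebra.
Variable K : nzRingType.
Implicit Types m k n l : nat.

Lemma bip_adj_mul m k (B : 'M[nat]_(m, k)) (a : 'rV[K]_m) (b : 'rV[K]_k) :
  row_mx a b *m bip_adj K B = row_mx (b *m nat_mx K B^T) (a *m nat_mx K B).
Proof. by rewrite /bip_adj mul_row_block !mulmx0 add0r addr0. Qed.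

Lemma bip_adj0 m k : bip_adj K (0 : 'M[nat]_(m, k)) = 0.
Proof.
rewrite /bip_adj trmx0 -block_mx0; congr block_mx;
  by apply/matrixP => i j; rewrite !mxE.
Qed.

Lemma nat_mx_tr m k (B : 'M[nat]_(m, k)) : nat_mx K B^T = (nat_mx K B)^T.
Proof. by rewrite /nat_mx map_trmx. Qed.

Lemma const_mul_nat_mx m k (B : 'M[nat]_(m, k)) c :
  (forall j, (\sum_i B i j)%N = c) ->
  (const_mx 1 : 'rV[K]_m) *m nat_mx K B = c%:R *: const_mx 1.
Proof.
move=> B_col; apply/rowP => j; rewrite !mxE -(B_col j) natr_sum mulr1.
by apply: eq_bigr => i _; rewrite !mxE mul1r.
Qed.

Lemma nat_mx_merge_right m n l (B : 'M[nat]_(m, n)) (f : 'I_n -> 'I_l) :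
  nat_mx K (merge_right B f) = nat_mx K B *m merge_mx K f.
Proof.
apply/matrixP => i g; rewrite !mxE natr_sum big_mkcond /=; apply: eq_bigr => j _.
by rewrite !mxE; case: eqP; rewrite ?mulr1 ?mulr0.
Qed.

Lemma merge_right_row_sum m n l (B : 'M[nat]_(m, n)) (f : 'I_n -> 'I_l) i :
  (\sum_g merge_right B f i g = \sum_j B i j)%N.
Proof.
rewrite (partition_big f xpredT) //=; apply: eq_bigr => g _; rewrite mxE.
by apply: eq_bigl => j.
Qed.

Lemma merge_right_col_sum m n l (B : 'M[nat]_(m, n)) (f : 'I_n -> 'I_l) c gamma :
  (forall j, (\sum_i B i j)%N = c) -> (forall g, #|[set j | f j == g]| = gamma) ->
  forall g, (\sum_i merge_right B f i g)%N = (gamma * c)%N.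
Proof.
move=> B_col f_card g; under eq_bigr do rewrite mxE.
rewrite exchange_big /= (eq_bigr (fun=> c)) // sum_nat_const -(f_card g).
by rewrite cardsE.
Qed.

Lemma merge_right_eq0 m n l (B : 'M[nat]_(m, n)) (f : 'I_n -> 'I_l) :
  (forall i, (\sum_j B i j)%N = 0%N) -> merge_right B f = 0.
Proof.
move=> B_row; apply/matrixP => i g; rewrite !mxE big1 // => j _.
by have /eqP := B_row i; rewrite sum_nat_eq0 => /forallP/(_ j)/eqP.
Qed.

Lemma merge_mx_tr_mul n l (f : 'I_n -> 'I_l) gamma :
  (forall g, #|[set j | f j == g]| = gamma) ->
  (merge_mx K f)^T *m merge_mx K f = gamma%:R *: 1%:M.
Proof.
move=> f_card; apply/matrixP => g h; rewrite !mxE.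
have [<- | gh] := eqVneq g h.
  rewrite mulr1n mulr1 -(f_card g) -sum1_card natr_sum [RHS]big_mkcond /=.
  by apply: eq_bigr => j _; rewrite !mxE inE; case: eqP; rewrite ?mulr1 ?mulr0.
rewrite mulr0 big1 // => j _; rewrite !mxE.
by have [-> | _] := eqVneq (f j) g; rewrite ?(negbTE gh) ?mulr0 ?mul0r.
Qed.

Lemma const_mul_merge_mx n l (f : 'I_n -> 'I_l) gamma :
  (forall g, #|[set j | f j == g]| = gamma) ->
  (const_mx 1 : 'rV[K]_n) *m merge_mx K f = gamma%:R *: const_mx 1.
Proof.
move=> f_card; apply/rowP => g; rewrite !mxE mulr1 -(f_card g) -sum1_card natr_sum.
rewrite [RHS]big_mkcond; apply: eq_bigr => j _.
by rewrite !mxE mul1r inE; case: eqP.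
Qed.

End BipartiteAlgebra.

Lemma bip_adj_const_eigen (K : comNzRingType) m k (B : 'M[nat]_(m, k)) dL dR (b : K) :
  (forall i, (\sum_j B i j)%N = dL) -> (forall j, (\sum_i B i j)%N = dR) ->
  b ^+ 2 * dL%:R = dR%:R ->
  row_mx (const_mx 1 : 'rV[K]_m) (b *: (const_mx 1 : 'rV[K]_k)) *m bip_adj K B =
  (b * dL%:R) *: row_mx (const_mx 1) (b *: const_mx 1).
Proof.
move=> B_row B_col b_deg; have B_tr_col i : (\sum_j B^T j i)%N = dL.
  by rewrite -(B_row i); apply: eq_bigr => j _; rewrite mxE.
rewrite bip_adj_mul -scalemxAl (const_mul_nat_mx _ B_tr_col) (const_mul_nat_mx _ B_col).
by rewrite scale_row_mx !scalerA mulrAC -expr2 b_deg.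
Qed.

Lemma merge_right_top_eigen (K : comNzRingType) n l d1 gamma (B : 'M[nat]_n)
    (f : 'I_n -> 'I_l) (b : K) :
  (forall i, (\sum_j B i j)%N = d1) -> (forall j, (\sum_i B i j)%N = d1) ->
  (forall g, #|[set j | f j == g]| = gamma) -> b ^+ 2 = gamma%:R ->
  row_mx (const_mx 1 : 'rV[K]_n) (b *: (const_mx 1 : 'rV[K]_l)) *m
    bip_adj K (merge_right B f) = (b * d1%:R) *: row_mx (const_mx 1) (b *: const_mx 1).
Proof.
move=> B_row B_col f_card b2; apply: bip_adj_const_eigen.
- by move=> i; rewrite merge_right_row_sum B_row.
- exact: merge_right_col_sum B_col f_card.
- by rewrite b2 -natrM.
Qed.

Section BipartiteDot.
Variable C : numClosedFieldType.
Implicit Types m k n l : nat.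

Lemma nat_mx_trC m k (B : 'M[nat]_(m, k)) : (nat_mx C B)^t* = nat_mx C B^T.
Proof. by apply/matrixP => i j; rewrite !mxE conjC_nat. Qed.

Lemma dotmx_merge_mx_tr n l (f : 'I_n -> 'I_l) (b : 'rV[C]_l) (u : 'rV[C]_n) :
  '[b *m (merge_mx C f)^T, u] = '[b, u *m merge_mx C f].
Proof.
rewrite dotmx_mulmxl; congr ('[_, _ *m _]).
by apply/matrixP => j g; rewrite !mxE conjC_nat.
Qed.

Lemma bip_eigen_dnorm m k (B : 'M[nat]_(m, k)) (a : 'rV[C]_m) (b : 'rV[C]_k) x :
  row_mx a b *m bip_adj C B = x *: row_mx a b -> x^* = x -> x != 0 ->
  '[a] = '[b].
Proof.
rewrite bip_adj_mul scale_row_mx => /eq_row_mx[ba ab] x_real x_neq0.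
apply: (mulfI x_neq0); rewrite -[x * '[b]]linearZl_LR /= -ab dotmx_mulmxl nat_mx_trC ba.
by rewrite linearZr /= x_real.
Qed.

Lemma dotmx_const_pm_orth m k (a : 'rV[C]_m) (b : 'rV[C]_k) c :
  c^* = c -> c != 0 ->
  '[row_mx a b, row_mx (const_mx 1) (c *: const_mx 1)] = 0 ->
  '[row_mx a b, row_mx (const_mx 1) (- c *: const_mx 1)] = 0 ->
  '[b, const_mx 1] = 0.
Proof.
move=> c_real c_neq0; rewrite !dotmx_row_mx !linearZr /= rmorphN /= c_real => vp vm.
have : c * '[b, const_mx 1] = - c * '[b, const_mx 1].
  by apply/(addrI '[a, const_mx 1]); rewrite vp vm.
move/eqP; rewrite mulNr -subr_eq0 opprK -mulr2n mulrn_eq0 mulf_eq0 (negbTE c_neq0).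
by move/eqP.
Qed.

Lemma bip_eigen_rsub_neq0 m k (B : 'M[nat]_(m, k)) (a : 'rV[C]_m) (b : 'rV[C]_k) x :
  row_mx a b *m bip_adj C B = x *: row_mx a b -> x != 0 -> row_mx a b != 0 ->
  b != 0.
Proof.
rewrite bip_adj_mul scale_row_mx => /eq_row_mx[ba _] x_neq0.
apply: contra_neq => b0; move: ba; rewrite b0 mul0mx => /esym/eqP.
by rewrite scaler_eq0 (negbTE x_neq0) => /eqP->; rewrite row_mx0.
Qed.

End BipartiteDot.

Lemma mup_map_poly (F K : fieldType) (f : {rmorphism F -> K}) (p : {poly F}) x :
  p != 0 -> mup (f x) (map_poly f p) = mup x p.
Proof.
move=> p_neq0; have fp_neq0 : map_poly f p != 0 by rewrite map_poly_eq0.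
have XsubC_map k : ('X - (f x)%:P) ^+ k = map_poly f (('X - x%:P) ^+ k).
  by rewrite rmorphXn /= map_polyXsubC.
apply/eqP; rewrite eqn_leq; apply/andP; split.
  by rewrite mup_leq // XsubC_map dvdp_map -mup_leq.
by rewrite mup_geq // XsubC_map dvdp_map -mup_geq.
Qed.

Section RealSpectrum.
Variable R : rcfType.
Local Notation C := R[i].
Local Notation toC := (real_complex R).
Implicit Types (N : nat) (s al : R).

Lemma toC_conj (r : R) : (toC r)^* = toC r.
Proof. by apply: conj_Creal; apply/complex_realP; exists r. Qed.

Lemma realmx_toC m n (M : 'M[R]_(m, n)) : map_mx toC M \is a realmx.
Proof. by apply/mxOverP => i j; rewrite mxE; apply/complex_realP; exists (M i j). Qed.

Lemma normr_toC (r : R) : `|toC r| = toC `|r|.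
Proof.
have [r_ge0 | r_lt0] := lerP 0 r.
  by rewrite !ger0_norm // -(rmorph0 toC) lecR.
by rewrite !ltr0_norm ?rmorphN // -(rmorph0 toC) ltcR.
Qed.

Lemma card_toC N (d : 'rV[R]_N) a :
  #|[pred i | (map_mx toC d) 0%R i == toC a]| = #|[pred i | d 0 i == a]|.
Proof. by apply: eq_card => i; rewrite !inE mxE (inj_eq (@complexI R)). Qed.

Lemma real_sym_spectral N (A : 'M[R]_N) : A^T = A ->
  exists2 P : 'M[C]_N, P \is unitarymx &
    exists d : 'rV[R]_N, map_mx toC A = P^t* *m diag_mx (map_mx toC d) *m P.
Proof.
move=> A_sym; have A_herm : map_mx toC A \is hermsymmx.
  apply: realsym_hermsym; last exact: realmx_toC.
  by apply/is_hermitianmxP; rewrite expr0 scale1r map_mx_id // map_trmx A_sym.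
have /orthomx_spectralP A_spec := hermitian_normalmx A_herm.
have P_unitary := spectral_unitarymx (map_mx toC A).
exists (spectralmx (map_mx toC A)) => //.
exists (map_mx (@complex.Re R) (spectral_diag (map_mx toC A))).
rewrite {1}A_spec invmx_unitary //; congr (_ *m diag_mx _ *m _).
apply/matrixP => i j; rewrite !mxE RRe_real //.
by have /mxOverP := hermitian_spectral_diag_real A_herm; apply.
Qed.

Lemma bip_adj_spectral m k (B : 'M[nat]_(m, k)) :
  exists2 P : 'M[C]_(m + k), P \is unitarymx & exists2 d : 'rV[R]_(m + k),
    bip_adj C B = P^t* *m diag_mx (map_mx toC d) *m P &
    forall a, mup a (char_poly (bip_adj R B)) = #|[pred i | d 0 i == a]|.
Proof.
have A_sym : (bip_adj R B)^T = bip_adj R B.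
  by rewrite /bip_adj tr_block_mx !trmx0 -!map_trmx trmxK.
have A_toC : map_mx toC (bip_adj R B) = bip_adj C B.
  rewrite /bip_adj map_block_mx !map_mx0 -!map_mx_comp; congr block_mx;
    by apply: eq_map_mx => a /=; rewrite rmorph_nat.
have [P P_unitary [d A_def]] := real_sym_spectral A_sym.
exists P => //; exists d; first by rewrite -A_toC.
move=> a; rewrite -(mup_map_poly toC) ?monic_neq0 ?char_poly_monic //.
rewrite map_char_poly (unitary_diag_mup P_unitary A_def).
exact: card_toC.
Qed.

Lemma second_eig_ge0 N (A : 'M[R]_N) s : 0 <= second_eig A s.
Proof. by apply: (big_ind (fun x => 0 <= x)) => // x y; rewrite le_max => ->. Qed.

Lemma second_eig_le N (A : 'M[R]_N) s c : 0 <= c ->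
  (forall x, ((x == s) + (x == - s) < mup x (char_poly A))%N -> `|x| <= c) ->
  second_eig A s <= c.
Proof. by move=> c_ge0 le_c; apply: bigmax_le => // x _; apply: le_c. Qed.

Lemma mup_le_second_eig N (A : 'M[R]_N) s al x :
  second_eig A s <= al -> al < `|x| ->
  (mup x (char_poly A) <= (x == s) + (x == - s))%N.
Proof.
move=> A_eig al_lt_x; rewrite leqNgt; apply: contraTN al_lt_x => x_mult.
have p_neq0 : char_poly A != 0 by rewrite monic_neq0 ?char_poly_monic.
have x_root : root (char_poly A) x.
  by apply: contraLR x_mult => /mupNroot ->.
have x_in : x \in rootsR (char_poly A) by rewrite -(roots_on_rootsR p_neq0) x_root.
by rewrite -leNgt (le_trans _ A_eig) // (le_bigmax_seq _ _ _ _ x_in x_mult).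
Qed.

Lemma large_eigen_simple N (A : 'M[R]_N) (d : 'rV[R]_N) s al i :
  (forall a, mup a (char_poly A) = #|[pred j | d 0 j == a]|) ->
  second_eig A s <= al -> 0 <= al -> al < `|d 0 i| ->
  (d 0 i = s \/ d 0 i = - s) /\ (forall j, d 0 j = d 0 i -> j = i).
Proof.
move=> d_mup A_eig al_ge0 al_lt; set r := d 0 i in al_lt *.
have r_neq0 : r != 0 by apply: contraTneq al_lt => ->; rewrite normr0 -leNgt.
have card_le : (#|[pred j | d 0%R j == r]| <= (r == s) + (r == - s))%N.
  by rewrite -d_mup (mup_le_second_eig A_eig al_lt).
have sign_le1 : ((r == s) + (r == - s) <= 1)%N.
  have [r_s | _] := eqVneq r s; last by case: (_ == _).
  by rewrite add1n ltnS leqn0 eqb0 r_s -subr_eq0 opprK -mulr2n mulrn_eq0 /= -r_s.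
split.
  have : (0 < (r == s) + (r == - s))%N.
    by apply: leq_trans card_le; apply/card_gt0P; exists i; rewrite inE.
  by case: eqP => [|_]; [left | case: eqP => [|_]; [right |]].
move=> j dj; have /card_le1_eqP r_uniq := leq_trans card_le sign_le1.
by apply: r_uniq; rewrite inE ?dj.
Qed.

Lemma second_eig0 N s : second_eig (0 : 'M[R]_N) s = 0.
Proof.
apply/eqP; rewrite eq_le second_eig_ge0 andbT; apply: second_eig_le => // x x_mult.
have : eigenvalue (0 : 'M[R]_N) x.
  by rewrite eigenvalue_root_char; apply: contraLR x_mult => /mupNroot ->.
case/eigenvalueP => v; rewrite mulmx0 => /esym/eqP; rewrite scaler_eq0.
by case/orP => [/eqP -> _ | /eqP -> /eqP //]; rewrite normr0.
Qed.

Lemma sqrt_natM_sq (j k : nat) :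
  Num.sqrt ((k * (j * k))%N%:R : R) = Num.sqrt j%:R * k%:R.
Proof. by rewrite mulnCA natrM sqrtrM ?ler0n // natrM -expr2 sqrtr_sqr ger0_norm. Qed.

End RealSpectrum.

Section MergedSpectrum.
Variable R : rcfType.
Local Notation C := R[i].
Local Notation toC := (real_complex R).
Implicit Types al x : R.

Lemma regular_bip_contract n d1 (B : 'M[nat]_n) al :
  (forall i, (\sum_j B i j)%N = d1) -> (forall j, (\sum_i B i j)%N = d1) ->
  second_eig (bip_adj R B) d1%:R <= al ->
  forall y : 'rV[C]_n, '[y, const_mx 1] = 0 ->
  '[y *m nat_mx C B^T] <= toC al ^+ 2 * '[y].
Proof.
move=> B_row B_col B_eig y y_orth.
have al_ge0 : 0 <= al := le_trans (second_eig_ge0 _ _) B_eig.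
have [P P_unitary [d A_def d_mup]] := bip_adj_spectral R B.
pose z := row_mx (0 : 'rV[C]_n) y.
have -> : '[y *m nat_mx C B^T] = '[z *m bip_adj C B].
  by rewrite bip_adj_mul mul0mx dotmx_row_mx linear0l addr0.
have -> : '[y] = '[z] by rewrite dotmx_row_mx linear0l add0r.
apply: (unitary_diag_dnorm_le P_unitary A_def).
  by rewrite -(rmorph0 toC) lecR.
move=> i; rewrite mxE normr_toC lecR.
have [|al_lt] := lerP `|d 0 i| al; [by left | right].
have [d_pm d_simple] := large_eigen_simple d_mup B_eig al_ge0 al_lt.
have [sg sg2 d_sg] : exists2 sg : C, sg ^+ 2 * d1%:R = d1%:R &
    (map_mx toC d) 0 i = sg * d1%:R.
  rewrite mxE; case: d_pm => ->; [exists 1 | exists (-1)];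
    by rewrite ?sqrrN ?expr1n ?mul1r ?rmorphN ?mulN1r ?rmorph_nat.
have := bip_adj_const_eigen B_row B_col sg2; rewrite -d_sg => e_eigen.
apply: (unitary_diag_simple_orth P_unitary (realmx_toC d) A_def e_eigen).
- have : (0 < n + n)%N := leq_ltn_trans (leq0n i) (ltn_ord i).
  rewrite addn_gt0 orbb => n_gt0.
  apply/negP => /eqP/rowP/(_ (lshift n (Ordinal n_gt0))).
  by rewrite row_mxEl !mxE => /eqP; rewrite oner_eq0.
- by move=> j; rewrite !mxE => /complexI/d_simple.
- by rewrite dotmx_row_mx linear0l add0r linearZr /= y_orth mulr0.
Qed.

Lemma merged_eigenvector n l d1 gamma (B : 'M[nat]_n) (f : 'I_n -> 'I_l) (x : R) :
  (forall i, (\sum_j B i j)%N = d1) -> (forall j, (\sum_i B i j)%N = d1) ->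
  (0 < gamma)%N -> (forall g, #|[set j | f j == g]| = gamma) -> (0 < d1)%N ->
  x != 0 ->
  let s := Num.sqrt gamma%:R * d1%:R in
  ((x == s) + (x == - s) < mup x (char_poly (bip_adj R (merge_right B f))))%N ->
  exists a : 'rV[C]_n, exists2 b : 'rV[C]_l, b != 0 &
    [/\ b *m (merge_mx C f)^T *m nat_mx C B^T = toC x *: a,
        '[b, const_mx 1] = 0 & '[a] = '[b]].
Proof.
move=> B_row B_col gamma_gt0 f_card d1_gt0 x_neq0 s x_mult.
have [P P_unitary [d H_def d_mup]] := bip_adj_spectral R (merge_right B f).
set c := toC (Num.sqrt gamma%:R).
have c2 : c ^+ 2 = gamma%:R by rewrite -rmorphXn sqr_sqrtr ?ler0n // rmorph_nat.
have c_neq0 : c != 0.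
  by rewrite -(rmorph0 toC) (inj_eq (@complexI R)) sqrtr_eq0 -ltNge ltr0n.
have s_toC : toC s = c * d1%:R by rewrite rmorphM rmorph_nat.
have e1 := merge_right_top_eigen B_row B_col f_card c2.
have e2 := merge_right_top_eigen B_row B_col f_card (etrans (sqrrN c) c2).
rewrite mulNr -s_toC in e1 e2.
have s_neq_Ns : toC s != - toC s.
  rewrite -subr_eq0 opprK -mulr2n mulrn_eq0 /= s_toC mulf_neq0 //.
  by rewrite pnatr_eq0 -lt0n.
have Ns_conj : (- toC s)^* = - toC s by rewrite -rmorphN toC_conj.
have x_mult' : ((toC x == toC s) + (toC x == - toC s) <
                #|[pred i | (map_mx toC d) 0%R i == toC x]|)%N.
  by rewrite card_toC -d_mup -rmorphN !(inj_eq (@complexI R)).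
have [v v_neq0 [vH v1 v2]] := exists_eigen_orth2 P_unitary (realmx_toC d) H_def e1 e2
  (toC_conj s) Ns_conj s_neq_Ns x_mult'.
rewrite -[v]hsubmxK in v_neq0 vH v1 v2.
set a := lsubmx v in v_neq0 vH v1 v2; set b := rsubmx v in v_neq0 vH v1 v2.
have toCx_neq0 : toC x != 0 by rewrite -(rmorph0 toC) (inj_eq (@complexI R)).
exists a, b; last split.
- exact: bip_eigen_rsub_neq0 vH toCx_neq0 v_neq0.
- move: vH; rewrite bip_adj_mul scale_row_mx => /eq_row_mx[<- _].
  by rewrite !nat_mx_tr nat_mx_merge_right trmx_mul mulmxA.
- exact: dotmx_const_pm_orth (toC_conj _) c_neq0 v1 v2.
- exact: bip_eigen_dnorm vH (toC_conj x) toCx_neq0.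
Qed.

Lemma merged_eig_sq_le n l d1 gamma (B : 'M[nat]_n) (f : 'I_n -> 'I_l) al x :
  (forall i, (\sum_j B i j)%N = d1) -> (forall j, (\sum_i B i j)%N = d1) ->
  second_eig (bip_adj R B) d1%:R <= al ->
  (0 < gamma)%N -> (forall g, #|[set j | f j == g]| = gamma) -> (0 < d1)%N ->
  x != 0 ->
  let s := Num.sqrt gamma%:R * d1%:R in
  ((x == s) + (x == - s) < mup x (char_poly (bip_adj R (merge_right B f))))%N ->
  x ^+ 2 <= gamma%:R * al ^+ 2.
Proof.
move=> B_row B_col B_eig gamma_gt0 f_card d1_gt0 x_neq0 s x_mult.
have [a [b b_neq0 [ba b_orth ab]]] :=
  merged_eigenvector B_row B_col gamma_gt0 f_card d1_gt0 x_neq0 x_mult.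
set y := b *m (merge_mx C f)^T.
have y_orth : '[y, const_mx 1] = 0.
  by rewrite dotmx_merge_mx_tr (const_mul_merge_mx _ f_card) linearZr /= b_orth mulr0.
have y_dnorm : '[y] = gamma%:R * '[b].
  rewrite dotmx_merge_mx_tr -mulmxA (merge_mx_tr_mul _ f_card) -scalemxAr mulmx1.
  by rewrite linearZr /= conjC_nat.
have := regular_bip_contract B_row B_col B_eig y_orth.
have b_pos : 0 < '[b] by rewrite (dnorm_gt0 (@dotmx C l)).
rewrite ba y_dnorm (dnormZ (@dotmx C n)) /= ab mulrA ler_pM2r //.
rewrite normr_toC -!rmorphXn -(rmorph_nat toC) -rmorphM lecR.
by rewrite real_normK ?num_real // mulrC.
Qed.

End MergedSpectrum.

Theorem proposition2 (R : rcfType) (n d1 gamma : nat) (B : 'M[nat]_n) (alpha : R)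
  (f : 'I_n -> 'I_(n %/ gamma))
  (HrowG : forall i : 'I_n, (\sum_(j < n) B i j)%N = d1)
  (HcolG : forall j : 'I_n, (\sum_(i < n) B i j)%N = d1)
  (Halpha : second_eig (bip_adj R B) (Num.sqrt ((d1 * d1)%N%:R)) <= alpha)
  (Hgamma_pos : (0 < gamma)%N) (Hgamma_dvd : (gamma %| n)%N)
  (Hgroups : forall g : 'I_(n %/ gamma), #|[set j | f j == g]| = gamma) :
  let d2 := (gamma * d1)%N in
  `| second_eig (bip_adj R (merge_right B f)) (Num.sqrt ((d1 * d2)%N%:R)) |
    <= Num.sqrt ((d1 * d2)%N%:R) * alpha.
Proof.
cbv zeta; rewrite sqrt_natM_sq.
have G_eig : second_eig (bip_adj R B) d1%:R <= alpha.
  by move: Halpha; rewrite -{2}[d1]mul1n sqrt_natM_sq sqrtr1 mul1r.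
have alpha_ge0 : 0 <= alpha := le_trans (second_eig_ge0 _ _) G_eig.
rewrite ger0_norm ?second_eig_ge0 //.
have [d1_0 | d1_gt0] := posnP d1.
  rewrite merge_right_eq0 => [|i]; last by rewrite HrowG.
  by rewrite bip_adj0 second_eig0 d1_0 mulr0 mul0r.
apply: second_eig_le => [|x x_mult]; first by rewrite !mulr_ge0 ?sqrtr_ge0.
have [-> | x_neq0] := eqVneq x 0; first by rewrite normr0 !mulr_ge0 ?sqrtr_ge0.
have x_sq := merged_eig_sq_le HrowG HcolG G_eig Hgamma_pos Hgroups d1_gt0 x_neq0 x_mult.
apply: (@le_trans _ _ (Num.sqrt gamma%:R * alpha)).
  rewrite -(@ler_pXn2r _ 2) ?nnegrE ?mulr_ge0 ?sqrtr_ge0 //.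
  by rewrite real_normK ?num_real // exprMn sqr_sqrtr ?ler0n.
by rewrite mulrAC ler_peMr ?mulr_ge0 ?sqrtr_ge0 // ler1n.
Qed.
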